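(* Let $Q,H\in\mathbb{S}^n$ and $\mathcal{B}=\{B^1,\dots,B^m\}\subseteq\mathbb{S}^n$. Assume $\mathcal{B}$ satisfies Condition (B): for every $k$, $$\{X\in\mathbb{S}^n_+ : B^k\bullet X=0\}\subseteq \mathbb{J}_+(\mathcal{B}):=\{X\in\mathbb{S}^n_+ : B^j\bullet X\ge 0\ (1\le j\le m)\}.$$ Let $\overline{X}\in\mathbb{S}^n$ satisfy the KKT conditions: $\overline{X}\in\mathbb{J}_+(\mathcal{B})$, $H\bullet\overline{X}=1$, and there exist $\bar t\in\mathbb{R}$, $\bar y\in\mathbb{R}^m$ with $\bar y\ge 0$, and $\overline{Y}\in\mathbb{S}^n_+$ such that $Q-\bar tH-\sum_{k=1}^m\bar y_kB^k=\overline{Y}$, $\bar y_k(B^k\bullet\overline{X})=0$ $(1\le k\le m)$ and $\overline{Y}\bullet\overline{X}=0$. Suppose that $B^k\bullet\overline{X}=0$ for some $k\in\{1,\dots,m\}$. Then, with $r=\operatorname{rank}\overline{X}$, there exist $x\in\mathbb{R}^n$ and $\tau\ge 1/r$ with $H\bullet xx^T=\tau$ such that $\widetilde{X}=xx^T/\tau$ is an optimal solution of the SDP $$\eta=\inf\{Q\bullet X : X\in\mathbb{J}_+(\mathcal{B}),\ H\bullet X=1\}$$ and also an optimal solution of the QCQP $$\zeta=\inf\{Q\bullet X : X\in\mathbb{J}_+(\mathcal{B}),\ \operatorname{rank}X= 1,\ H\bullet X=1\},$$ with $Q\bullet\widetilde{X}=Q\bullet\overline{X}$.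
   Context: $\mathbb{S}^n$ denotes the space of real $n\times n$ symmetric matrices, $\mathbb{S}^n_+$ its cone of positive semidefinite matrices, and $A\bullet X=\sum_{i,j}A_{ij}X_{ij}$ the trace inner product. *)

From mathcomp Require Import all_boot all_order all_algebra.
From mathcomp Require Import reals.
Set Implicit Arguments. Unset Strict Implicit. Unset Printing Implicit Defensive.
Import Order.TTheory GRing.Theory Num.Theory.
Local Open Scope ring_scope.

Definition frob (R : realType) (n : nat) (A X : 'M[R]_n) : R :=
  \sum_(i < n) \sum_(j < n) A i j * X i j.

Definition symmS (R : realType) (n : nat) (X : 'M[R]_n) : Prop := X^T = X.

Definition psd (R : realType) (n : nat) (X : 'M[R]_n) : Prop :=
  symmS X /\ forall v : 'cV[R]_n, 0 <= (v^T *m X *m v) 0 0.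

Definition Jplus (R : realType) (n m : nat) (B : 'I_m -> 'M[R]_n) (X : 'M[R]_n) : Prop :=
  psd X /\ forall j, 0 <= frob (B j) X.

Definition condB (R : realType) (n m : nat) (B : 'I_m -> 'M[R]_n) : Prop :=
  forall k (X : 'M[R]_n), psd X -> frob (B k) X = 0 -> Jplus B X.

Definition sdp_optimal (R : realType) (n m : nat) (B : 'I_m -> 'M[R]_n)
  (Q H X : 'M[R]_n) : Prop :=
  (Jplus B X /\ frob H X = 1) /\
  forall Y, Jplus B Y -> frob H Y = 1 -> frob Q X <= frob Q Y.

Definition qcqp_optimal (R : realType) (n m : nat) (B : 'I_m -> 'M[R]_n)
  (Q H X : 'M[R]_n) : Prop :=
  (Jplus B X /\ \rank X = 1%N /\ frob H X = 1) /\
  forall Y, Jplus B Y -> \rank Y = 1%N -> frob H Y = 1 -> frob Q X <= frob Q Y.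

(* Xbar is a sum of dyads x x^T (peel off the dyad of a pivot column), and
   two dyads on which B^k takes values of opposite signs can be rotated,
   (a, b) -> (a + t b, b - t a) / sqrt (1 + t^2), into two dyads with the same
   sum, the first one orthogonal to B^k.  Since B^k . Xbar = 0, this yields a
   decomposition of Xbar into B^k-orthogonal dyads, which lie in J_+(B) by
   Condition (B).  Complementary slackness for Xbar states that sums over the
   dyads of nonnegative terms vanish, so it holds for every dyad; a dyad with
   H . x x^T > 0, normalised, then attains the dual value tbar, which weak
   duality makes a lower bound for both the SDP and the QCQP. *)

From mathcomp Require Import all_boot all_order all_algebra.
From mathcomp Require Import reals.
From mathcomp Require Import ring lra.
Set Implicit Arguments. Unset Strict Implicit. Unset Printing Implicit Defensive.
Import Order.TTheory GRing.Theory Num.Theory.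
Local Open Scope ring_scope.

Lemma discr_le0 (R : realFieldType) (a b c : R) : 0 <= c ->
  (forall t, 0 <= a + 2 * b * t + c * t ^+ 2) -> b ^+ 2 <= a * c.
Proof.
rewrite le_eqVlt => /predU1P[<- | c_gt0] q_ge0.
  have [-> | b0] := eqVneq b 0; first by rewrite expr0n mulr0.
  have := q_ge0 (- (a + 1) / (2 * b)).
  have -> : a + 2 * b * (- (a + 1) / (2 * b)) + 0 * (- (a + 1) / (2 * b)) ^+ 2
            = -1 by field; rewrite b0.
  by rewrite ler0N1.
have := q_ge0 (- b / c).
have -> : a + 2 * b * (- b / c) + c * (- b / c) ^+ 2 = (a * c - b ^+ 2) / c.
  by field; rewrite gt_eqF.
by rewrite pmulr_lge0 ?invr_gt0 // subr_ge0.
Qed.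

Lemma quadratic_root (R : rcfType) (a b c : R) : a * c < 0 ->
  exists t, a + b * t + c * t ^+ 2 = 0.
Proof.
move=> ac_lt0; have c0 : c != 0 by apply: contraTneq ac_lt0 => ->; rewrite mulr0 ltxx.
have discr_ge0 : 0 <= b ^+ 2 - 4 * a * c by nra.
exists ((- b + Num.sqrt (b ^+ 2 - 4 * a * c)) / (2 * c)).
set d := b ^+ 2 - 4 * a * c.
transitivity ((Num.sqrt d ^+ 2 - d) / (4 * c)); first by rewrite /d; field.
by rewrite sqr_sqrtr // subrr mul0r.
Qed.

Lemma sum_has_opposite_sign (R : realDomainType) (I : eqType) (s : seq I)
    (F : I -> R) x :
  F x != 0 -> F x + \sum_(i <- s) F i = 0 -> exists2 i, i \in s & F x * F i < 0.
Proof.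
move=> Fx0 sum0.
have [/hasP[i si Fxi_lt0] | /hasPn same_sign] :=
  boolP (has (fun i => F x * F i < 0) s); first by exists i.
case/negP: Fx0; rewrite -sqrf_eq0 eq_le sqr_ge0 andbT.
have : 0 <= F x * \sum_(i <- s) F i.
  by rewrite mulr_sumr big_seq sumr_ge0 // => i /same_sign; rewrite -leNgt.
have -> : \sum_(i <- s) F i = - F x by apply/eqP; rewrite -addr_eq0 addrC sum0.
by rewrite mulrN oppr_ge0 -expr2.
Qed.

Lemma psumr_eq0_in (R : numDomainType) (I : eqType) (s : seq I) (F : I -> R) :
  {in s, forall i, 0 <= F i} -> \sum_(i <- s) F i = 0 -> {in s, forall i, F i = 0}.
Proof.
move=> F_ge0 /eqP; rewrite big_seq psumr_eq0 // => /allP F0 i si.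
by apply/eqP; apply: (implyP (F0 i si)).
Qed.

Lemma sumr_gt0_exists (R : realDomainType) (I : eqType) (s : seq I) (F : I -> R) :
  0 < \sum_(i <- s) F i -> exists2 i, i \in s & 0 < F i.
Proof.
have [/hasP[i si Fi_gt0] | /hasPn F_le0] := boolP (has (fun i => 0 < F i) s).
  by exists i.
by rewrite ltNge big_seq sumr_le0 // => i /F_le0; rewrite leNgt.
Qed.

Section FrobeniusPairing.
Variables (R : realType) (n : nat).
Implicit Types (A X Y : 'M[R]_n) (a b : 'cV[R]_n).

Lemma frobC A X : frob A X = frob X A.
Proof. by apply: eq_bigr => i _; apply: eq_bigr => j _; rewrite mulrC. Qed.

Lemma frobDr A X Y : frob A (X + Y) = frob A X + frob A Y.
Proof.
rewrite /frob -big_split; apply: eq_bigr => i _; rewrite -big_split.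
by apply: eq_bigr => j _; rewrite mxE mulrDr.
Qed.

Lemma frobZr A X c : frob A (c *: X) = c * frob A X.
Proof.
rewrite /frob mulr_sumr; apply: eq_bigr => i _; rewrite mulr_sumr.
by apply: eq_bigr => j _; rewrite mxE mulrCA.
Qed.

Lemma frob0r A : frob A 0 = 0.
Proof. by rewrite -(scale0r 0) frobZr mul0r. Qed.

Lemma frobDl A Y X : frob (A + Y) X = frob A X + frob Y X.
Proof. by rewrite frobC frobDr -!(frobC X). Qed.

Lemma frobZl A X c : frob (c *: A) X = c * frob A X.
Proof. by rewrite frobC frobZr frobC. Qed.

Lemma frobBl A Y X : frob (A - Y) X = frob A X - frob Y X.
Proof. by rewrite frobDl -scaleN1r frobZl mulN1r. Qed.

Lemma frob_sumr (I : Type) (s : seq I) A (F : I -> 'M[R]_n) :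
  frob A (\sum_(i <- s) F i) = \sum_(i <- s) frob A (F i).
Proof. exact: (big_morph (frob A) (frobDr A) (frob0r A)). Qed.

Lemma frob_suml (I : Type) (s : seq I) X (F : I -> 'M[R]_n) :
  frob (\sum_(i <- s) F i) X = \sum_(i <- s) frob (F i) X.
Proof. by rewrite frobC frob_sumr; apply: eq_bigr => i _; rewrite frobC. Qed.

Lemma mul_col_rowE a b i j : (a *m b^T) i j = a i 0 * b j 0.
Proof. by rewrite !mxE big_ord1 mxE. Qed.

Lemma bilin_frob X a b : (a^T *m X *m b) 0 0 = frob X (a *m b^T).
Proof.
rewrite mxE /frob exchange_big /=; apply: eq_bigr => j _.
rewrite mxE mulr_suml; apply: eq_bigr => i _.
by rewrite mul_col_rowE !mxE; ring.
Qed.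

Lemma frob_trmx_outer X a b : symmS X -> frob X (b *m a^T) = frob X (a *m b^T).
Proof.
move=> sX; rewrite -!bilin_frob.
have -> : b^T *m X *m a = (a^T *m X *m b)^T by rewrite !trmx_mul trmxK sX mulmxA.
by rewrite mxE.
Qed.

Lemma frob_delta_outer X i b :
  frob X ((delta_mx i 0 : 'cV[R]_n) *m b^T) = (row i X *m b) 0 0.
Proof. by rewrite -bilin_frob trmx_delta -rowE. Qed.

Lemma frob_delta_delta X i j :
  frob X ((delta_mx i 0 : 'cV[R]_n) *m (delta_mx j 0 : 'cV[R]_n)^T) = X i j.
Proof. by rewrite frob_delta_outer -colE !mxE. Qed.

End FrobeniusPairing.

Definition dyad (R : realType) (n : nat) (v : 'cV[R]_n) : 'M[R]_n := v *m v^T.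

Section Dyads.
Variables (R : realType) (n : nat).
Implicit Types (X : 'M[R]_n) (a b v : 'cV[R]_n).

Lemma dyadZ c v : dyad (c *: v) = c ^+ 2 *: dyad v.
Proof. by rewrite /dyad linearZ /= -scalemxAl -scalemxAr scalerA expr2. Qed.

Lemma dyadZ_sqrt c v : 0 <= c -> dyad (Num.sqrt c *: v) = c *: dyad v.
Proof. by move=> c0; rewrite dyadZ sqr_sqrtr. Qed.

Lemma dyadD a b t :
  dyad (a + t *: b) = dyad a + t *: (a *m b^T + b *m a^T) + t ^+ 2 *: dyad b.
Proof. by apply/matrixP => i j; rewrite !mxE !big_ord1 !mxE; ring. Qed.

Lemma frob_outer_dyad a v : frob (a *m a^T) (dyad v) = ((a^T *m v) 0 0) ^+ 2.
Proof.
rewrite [(_ *m v) 0 0]mxE expr2 /frob mulr_suml; apply: eq_bigr => i _.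
rewrite mulr_sumr; apply: eq_bigr => j _.
by rewrite /dyad !mul_col_rowE !mxE; ring.
Qed.

Lemma psd_dyad v : psd (dyad v).
Proof.
split; first by rewrite /symmS /dyad trmx_mul trmxK.
by move=> w; rewrite bilin_frob frob_outer_dyad sqr_ge0.
Qed.

Lemma psdZ c X : 0 <= c -> psd X -> psd (c *: X).
Proof.
move=> c0 [sX pX]; split; first by rewrite /symmS linearZ /= sX.
by move=> w; rewrite bilin_frob frobZl mulr_ge0 // -bilin_frob.
Qed.

Lemma rank_dyad v : dyad v != 0 -> \rank (dyad v) = 1%N.
Proof.
move=> v0; apply/eqP; rewrite eqn_leq mulmx_max_rank /=.
by rewrite lt0n mxrank_eq0.
Qed.

End Dyads.

Section PsdDecomposition.
Variables (R : realType) (n : nat).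
Implicit Types (X : 'M[R]_n) (a b v : 'cV[R]_n).

Lemma psd_cauchy_schwarz X a b :
  psd X -> frob X (a *m b^T) ^+ 2 <= frob X (dyad a) * frob X (dyad b).
Proof.
move=> [sX pX]; apply: discr_le0 => [|t]; first by rewrite -bilin_frob pX.
have := pX (a + t *: b); rewrite bilin_frob -/(dyad _) dyadD !frobDr !frobZr.
rewrite frobDr frob_trmx_outer //; congr (0 <= _); ring.
Qed.

Lemma psd_diag_ge0 X i : psd X -> 0 <= X i i.
Proof.
by move=> [_ pX]; have := pX (delta_mx i 0); rewrite bilin_frob frob_delta_delta.
Qed.

Lemma psd_diag_eq0 X i j : psd X -> X i i = 0 -> X i j = 0.
Proof.
move=> pX Xii0; have := psd_cauchy_schwarz (delta_mx i 0) (delta_mx j 0) pX.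
rewrite /dyad !frob_delta_delta Xii0 mul0r => h.
by apply/eqP; rewrite -sqrf_eq0 eq_le h sqr_ge0.
Qed.

Lemma psd_sub_pivot X i : psd X -> 0 < X i i ->
  psd (X - (X i i)^-1 *: (col i X *m (col i X)^T)).
Proof.
move=> psdX Xii_gt0; have [sX pX] := psdX; split.
  by rewrite /symmS linearB linearZ /= trmx_mul trmxK sX.
move=> w; rewrite bilin_frob frobBl frobZl frob_outer_dyad subr_ge0.
have -> : (col i X)^T = row i X by rewrite tr_col sX.
rewrite -(ler_pM2l Xii_gt0) mulrA mulfV ?gt_eqF // mul1r.
have := psd_cauchy_schwarz (delta_mx i 0) w psdX.
by rewrite frob_delta_outer /dyad frob_delta_delta.
Qed.

Lemma psd_sum_dyads X : psd X -> exists s, X = \sum_(v <- s) dyad v.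
Proof.
have [N] := ubnP #|[set i | X i i != 0]|; elim: N X => // N IH X.
case: (pickP (fun i => X i i != 0)) => [i /= Xii0 | Xdiag0] supp_lt psdX; last first.
  exists [::]; rewrite big_nil; apply/matrixP => i j; rewrite mxE.
  by apply: psd_diag_eq0 => //; apply/eqP; have := Xdiag0 i => /negbFE.
have Xii_gt0 : 0 < X i i by rewrite lt_def Xii0 psd_diag_ge0.
set v := Num.sqrt (X i i)^-1 *: col i X.
have dyad_v : dyad v = (X i i)^-1 *: (col i X *m (col i X)^T).
  by rewrite dyadZ_sqrt // invr_ge0 ltW.
set X' := X - dyad v.
have psdX' : psd X' by rewrite /X' dyad_v; exact: psd_sub_pivot.
have supp' : (#|[set k | X' k k != 0%R]| < N)%N.
  rewrite (cardsD1 i) inE Xii0 add1n ltnS in supp_lt.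
  apply: leq_ltn_trans supp_lt; apply/subset_leq_card/subsetP => k.
  rewrite !inE /X' dyad_v !mxE big_ord1 !mxE.
  have [-> | _] := eqVneq k i; first by rewrite mulKf // subrr eqxx.
  apply: contra => /eqP Xkk0.
  by rewrite Xkk0 (psd_diag_eq0 _ psdX Xkk0) !mulr0 subrr.
have [s Xs] := IH _ supp' psdX'.
by exists (v :: s); rewrite big_cons -Xs addrC subrK.
Qed.

Lemma psd_frob_ge0 X Y : psd X -> psd Y -> 0 <= frob X Y.
Proof.
move=> [_ pX] /psd_sum_dyads[s ->]; rewrite frob_sumr sumr_ge0 // => v _.
by rewrite -bilin_frob.
Qed.

End PsdDecomposition.

Section RankOneDecomposition.
Variables (R : realType) (n : nat).
Implicit Types (M X : 'M[R]_n) (a b v : 'cV[R]_n).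

Lemma dyad_rotation a b (t : R) :
  exists u : R, dyad (u *: (a + t *: b)) + dyad (u *: (b - t *: a)) = dyad a + dyad b.
Proof.
have t2_gt0 : 0 < 1 + t ^+ 2 by rewrite ltr_pwDl ?sqr_ge0.
exists (Num.sqrt (1 + t ^+ 2)^-1).
rewrite !dyadZ_sqrt ?invr_ge0 ?ltW //; apply/matrixP => i j.
rewrite !mxE !big_ord1 !mxE; field; exact: lt0r_neq0.
Qed.

Lemma dyad_split_zero M a b : frob M (dyad a) * frob M (dyad b) < 0 ->
  exists z c, frob M (dyad z) = 0 /\ dyad z + dyad c = dyad a + dyad b.
Proof.
move=> /(quadratic_root (frob M (a *m b^T + b *m a^T)))[t root_t].
have [u rot] := dyad_rotation a b t.
exists (u *: (a + t *: b)), (u *: (b - t *: a)); split => //.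
rewrite dyadZ frobZr dyadD !frobDr !frobZr.
by rewrite (mulrC t) (mulrC (t ^+ 2)) root_t mulr0.
Qed.

Lemma dyads_orth_decomposition M s : \sum_(v <- s) frob M (dyad v) = 0 ->
  exists2 s', \sum_(v <- s') dyad v = \sum_(v <- s) dyad v &
    {in s', forall v, frob M (dyad v) = 0}.
Proof.
have [N] := ubnP (size s); elim: N s => [|N IH] [|a t] //= size_t sum0.
  by exists [::].
rewrite ltnS in size_t; rewrite big_cons in sum0.
have [qa0 | qa_neq0] := eqVneq (frob M (dyad a)) 0.
  have sum_t : \sum_(v <- t) frob M (dyad v) = 0 by move: sum0; rewrite qa0 add0r.
  have [s' s's s'0] := IH t size_t sum_t.
  exists (a :: s'); first by rewrite !big_cons s's.
  by move=> v; rewrite inE => /predU1P[-> | /s'0].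
have [b bt /dyad_split_zero[z [c [qz0 zc]]]] :=
  sum_has_opposite_sign (F := fun v => frob M (dyad v)) qa_neq0 sum0.
have t_perm := perm_to_rem bt.
have qc : frob M (dyad c) = frob M (dyad a) + frob M (dyad b).
  by rewrite -frobDr -zc frobDr qz0 add0r.
have size_ct : (size (c :: rem b t) < N)%N by move: size_t; rewrite (perm_size t_perm).
have sum_ct : \sum_(v <- c :: rem b t) frob M (dyad v) = 0.
  by move: sum0; rewrite (perm_big _ t_perm) !big_cons qc addrA.
have [s' s's s'0] := IH _ size_ct sum_ct.
exists (z :: s').
  rewrite big_cons s's [in LHS]big_cons addrA zc.
  by rewrite big_cons (perm_big _ t_perm) big_cons addrA.
by move=> v; rewrite inE => /predU1P[-> | /s'0].
Qed.

Lemma psd_dyad_decomposition_orth M X : psd X -> frob M X = 0 ->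
  exists2 s, X = \sum_(v <- s) dyad v & {in s, forall v, frob M (dyad v) = 0}.
Proof.
move=> /psd_sum_dyads[s ->]; rewrite frob_sumr.
by move=> /dyads_orth_decomposition[s' <- s'0]; exists s'.
Qed.

End RankOneDecomposition.

Lemma JplusZ (R : realType) (n m : nat) (B : 'I_m -> 'M[R]_n) c Z :
  0 <= c -> Jplus B Z -> Jplus B (c *: Z).
Proof.
move=> c_ge0 [Zpsd BZ_ge0]; split; first exact: psdZ.
by move=> k; rewrite frobZr mulr_ge0.
Qed.

Section KKTConditions.
Variables (R : realType) (n m : nat) (Q H : 'M[R]_n) (B : 'I_m -> 'M[R]_n).
Variables (t : R) (y : 'I_m -> R) (Y : 'M[R]_n).
Hypotheses (y_ge0 : forall k, 0 <= y k) (psdY : psd Y).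
Hypothesis dual_feasible : Q - t *: H - \sum_(k < m) y k *: B k = Y.

Definition complementary (Z : 'M[R]_n) :=
  frob Y Z = 0 /\ forall k, y k * frob (B k) Z = 0.

Lemma frob_dual_split Z :
  frob Q Z = frob Y Z + t * frob H Z + \sum_(k < m) y k * frob (B k) Z.
Proof.
rewrite -dual_feasible !frobBl frobZl frob_suml.
by under eq_bigr do rewrite frobZl; ring.
Qed.

Lemma dual_lower_bound Z : Jplus B Z -> frob H Z = 1 -> t <= frob Q Z.
Proof.
move=> [psdZ BZ_ge0] HZ1; rewrite frob_dual_split HZ1 mulr1 -addrA addrCA lerDl.
by rewrite addr_ge0 ?psd_frob_ge0 ?sumr_ge0 // => k _; rewrite mulr_ge0.
Qed.

Lemma complementary_value Z : complementary Z -> frob H Z = 1 -> frob Q Z = t.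
Proof.
move=> [YZ0 yBZ0] HZ1.
by rewrite frob_dual_split YZ0 HZ1 mulr1 add0r big1 ?addr0.
Qed.

Lemma complementaryZ c Z : complementary Z -> complementary (c *: Z).
Proof.
move=> [YZ0 yBZ0]; split; first by rewrite frobZr YZ0 mulr0.
by move=> k; rewrite frobZr mulrCA yBZ0 mulr0.
Qed.

Lemma complementary_summands (I : eqType) (s : seq I) (F : I -> 'M[R]_n) :
  {in s, forall i, Jplus B (F i)} -> complementary (\sum_(i <- s) F i) ->
  {in s, forall i, complementary (F i)}.
Proof.
move=> JF [Y0 yB0] i si; split.
  apply: (psumr_eq0_in (F := fun j => frob Y (F j))) si; last by rewrite -frob_sumr.
  by move=> j /JF[psdF _]; apply: psd_frob_ge0.
move=> k; apply: (psumr_eq0_in (F := fun j => y k * frob (B k) (F j))) si.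
  by move=> j /JF[_ BF_ge0]; rewrite mulr_ge0.
by rewrite -mulr_sumr -frob_sumr.
Qed.

Lemma complementary_sdp_optimal Z :
  Jplus B Z -> frob H Z = 1 -> complementary Z -> sdp_optimal B Q H Z.
Proof.
move=> JZ HZ1 cZ; split=> // Z' JZ' HZ'1.
by rewrite complementary_value //; apply: dual_lower_bound.
Qed.

Lemma complementary_qcqp_optimal Z : Jplus B Z -> \rank Z = 1%N ->
  frob H Z = 1 -> complementary Z -> qcqp_optimal B Q H Z.
Proof.
move=> JZ rkZ HZ1 cZ; split=> // Z' JZ' _ HZ'1.
by rewrite complementary_value //; apply: dual_lower_bound.
Qed.

Lemma complementary_normalized_dyad (s : seq 'cV[R]_n) :
  {in s, forall v, Jplus B (dyad v)} -> complementary (\sum_(v <- s) dyad v) ->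
  frob H (\sum_(v <- s) dyad v) = 1 ->
  exists x, [/\ Jplus B (dyad x), frob H (dyad x) = 1 & complementary (dyad x)].
Proof.
move=> s_feas /(complementary_summands s_feas) s_compl sum_H1.
have [v vs Hv_gt0] : exists2 v, v \in s & 0 < frob H (dyad v).
  by apply: sumr_gt0_exists; rewrite -frob_sumr sum_H1 ltr01.
have Hv_inv_ge0 : 0 <= (frob H (dyad v))^-1 by rewrite invr_ge0 ltW.
exists (Num.sqrt (frob H (dyad v))^-1 *: v); rewrite dyadZ_sqrt //; split.
- exact: JplusZ (s_feas v vs).
- by rewrite frobZr mulVf ?gt_eqF.
- exact/complementaryZ/s_compl.
Qed.

End KKTConditions.
Unset Implicit Arguments.

Theorem mainTheorem4 (R : realType) (n m : nat)
  (Q H : 'M[R]_n) (B : 'I_m -> 'M[R]_n) (Xbar : 'M[R]_n) :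
  symmS Q -> symmS H -> (forall k, symmS (B k)) ->
  condB B ->
  symmS Xbar ->
  Jplus B Xbar -> frob H Xbar = 1 ->
  (exists (tbar : R) (ybar : 'I_m -> R) (Ybar : 'M[R]_n),
      (forall k, 0 <= ybar k) /\ psd Ybar /\
      Q - tbar *: H - \sum_(k < m) ybar k *: B k = Ybar /\
      (forall k, ybar k * frob (B k) Xbar = 0) /\
      frob Ybar Xbar = 0) ->
  (exists k, frob (B k) Xbar = 0) ->
  exists (x : 'cV[R]_n) (tau : R),
    ((\rank Xbar)%:R)^-1 <= tau /\
    frob H (x *m x^T) = tau /\
    sdp_optimal B Q H (tau^-1 *: (x *m x^T)) /\
    qcqp_optimal B Q H (tau^-1 *: (x *m x^T)) /\
    frob Q (tau^-1 *: (x *m x^T)) = frob Q Xbar.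
Proof.
move=> _ _ _ condB_B _ [psdXbar _] HXbar [t [y [Y [y_ge0 [psdY [dual [cBX cYX]]]]]]].
move=> [k BkX0].
have [s Xs s_orth] := psd_dyad_decomposition_orth psdXbar BkX0; subst Xbar.
have s_feas : {in s, forall v, Jplus B (dyad v)}.
  by move=> v /s_orth; apply: condB_B (psd_dyad v).
have [x [Jx Hx1 cx]] :=
  complementary_normalized_dyad y_ge0 psdY s_feas (conj cYX cBX) HXbar.
have rk_x : \rank (dyad x) = 1%N.
  apply: rank_dyad; apply/eqP => x0.
  by move: Hx1; rewrite x0 frob0r => /esym/eqP; rewrite oner_eq0.
(* [tau^-1 *: x x^T] is invariant under rescaling [x], so we may take
   [tau = 1]; the rank bound then also holds for [\rank Xbar = 0],
   since [0^-1 = 0]. *)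
exists x, 1; rewrite invr1 scale1r -/(dyad x); split.
  by case: (\rank _) => [|r]; rewrite ?invr0 // invf_le1 ?ler1n ?ltr0Sn.
split; first exact: Hx1.
split; first exact (complementary_sdp_optimal y_ge0 psdY dual Jx Hx1 cx).
split; first exact (complementary_qcqp_optimal y_ge0 psdY dual Jx rk_x Hx1 cx).
by rewrite !(complementary_value dual) //; split.
Qed.
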